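(* Let $M$ be a $3$-connected matroid, let $\mathcal{T}$ be a tangle of $M$, let $N$ be a minor of $M$, and let $X_1,\ldots,X_r$ be long lines of the tangle matroid $M(\mathcal{T})$ with $\rank_{\mathcal{T}}(X_1\cup\cdots\cup X_r)=2r$. Suppose that for all $i\in\{1,\ldots,r\}$: (1) $X_i\cap E(N)=\emptyset$; (2) $X_i$ contains an inclusionwise maximal fan $F_i$ of $M$ of length at least four; (3) there is an element $e_i\in F_i$ such that $M\setminus e_i$ is $3$-connected with $N$ as a minor. Then $M\setminus\{e_1,\ldots,e_r\}$ is $3$-connected with $N$ as a minor.
   Context: $\lambda_M(X) = \rank_M(X) + \rank_M(E(M)\setminus X) - \rank(M)$. A tangle of order $\theta$ of $M$ is a collection $\mathcal{T}$ of subsets of $E(M)$ such that: (i) $\lambda_M(X)<\theta$ for all $X\in\mathcal{T}$; (ii) for every $X\subseteq E(M)$ with $\lambda_M(X)<\theta$, either $X\in\mathcal{T}$ or $E(M)\setminus X\in\mathcal{T}$; (iii) if $X,Y,Z\in\mathcal{T}$ then $X\cup Y\cup Z\neq E(M)$; (iv) $E(M)\setminus\{e\}\notin\mathcal{T}$ for every $e\in E(M)$. The tangle matroid $M(\mathcal{T})$ has rank function $\rank_{\mathcal{T}}(X) = \min\{\lambda_M(Y): X\subseteq Y\in\mathcal{T}\}$ if some member of $\mathcal{T}$ contains $X$, and $\rank_{\mathcal{T}}(X)=\theta$ otherwise. A long line is a closed set of rank $2$ with at least $3$ elements. A triangle is a $3$-element set $T$ with $M|T\cong U_{2,3}$, a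 triad is a triangle of $M^*$. A fan of $M$ is a sequence $(x_1,\ldots,x_k)$, $k\geq3$, of distinct elements such that $\{x_1,x_2,x_3\}$ is a triangle or a triad, and for each $i\in\{1,\ldots,k-3\}$, if $\{x_i,x_{i+1},x_{i+2}\}$ is a triangle then $\{x_{i+1},x_{i+2},x_{i+3}\}$ is a triad, and if it is a triad then $\{x_{i+1},x_{i+2},x_{i+3}\}$ is a triangle; its length is $k$. ''$M'$ has $N$ as a minor'' means $N$ itself (with labelled ground set) equals $M'/C\setminus D$ for some disjoint $C,D\subseteq E(M')$. *)

(* Finite matroids, given by their rank function, on a
   ground set E : {set T} inside an ambient finite type T (so that minors
   keep their labelled ground sets). *)
From mathcomp Require Import all_boot.
Set Implicit Arguments. Unset Strict Implicit. Unset Printing Implicit Defensive.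

Section Matroids.
Variable T : finType.

(* A matroid: ground set and rank function; the rank axioms are required on
   subsets of the ground set only (values outside are irrelevant). *)
Record matroid := Matroid {
  ground : {set T};
  rk : {set T} -> nat;
  rk_card : forall X : {set T}, X \subset ground -> rk X <= #|X|;
  rk_mono : forall X Y : {set T}, X \subset Y -> Y \subset ground -> rk X <= rk Y;
  rk_submod : forall X Y : {set T}, X \subset ground -> Y \subset ground ->
      rk (X :|: Y) + rk (X :&: Y) <= rk X + rk Y
}.

Definition mrank (M : matroid) : nat := rk M (ground M).

Definition mdel (M : matroid) (D : {set T}) : matroid.
Proof.
refine (@Matroid (ground M :\: D) (rk M) _ _ _).
- by move=> X HX; apply: rk_card; apply: subset_trans HX (subsetDl _ _).
- by move=> X Y HXY HY; apply: rk_mono HXY (subset_trans HY (subsetDl _ _)).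
- by move=> X Y HX HY; apply: rk_submod;
    [apply: subset_trans HX (subsetDl _ _) | apply: subset_trans HY (subsetDl _ _)].
Defined.

(* "M' has N as a minor": N itself (labelled ground set) equals M'/C\D for
   some disjoint C, D.  The rank function of M'/C\D on a subset X of
   E(M') - (C u D) is r_{M'}(X u C) - r_{M'}(C). *)
Definition has_minor (M' N : matroid) : Prop :=
  exists C D : {set T},
    [/\ [disjoint C & D], C :|: D \subset ground M',
        ground N = ground M' :\: (C :|: D) &
        forall X : {set T}, X \subset ground N -> rk N X = rk M' (X :|: C) - rk M' C].

Definition conn (M : matroid) (X : {set T}) : nat :=
  rk M X + rk M (ground M :\: X) - mrank M.

(* Tutte: M is 3-connected iff it has no k-separation for k < 3, a
   k-separation being a partition (X, E - X) with |X|, |E - X| >= k and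
   lambda(X) < k. *)
Definition three_connected (M : matroid) : Prop :=
  forall (k : nat) (X : {set T}), 0 < k < 3 -> X \subset ground M ->
    k <= #|X| -> k <= #|ground M :\: X| -> k <= conn M X.

Definition is_tangle (M : matroid) (theta : nat) (Tg : {set {set T}}) : Prop :=
  [/\ (forall X : {set T}, X \in Tg -> X \subset ground M /\ conn M X < theta),
      (forall X : {set T}, X \subset ground M -> conn M X < theta ->
          X \in Tg \/ ground M :\: X \in Tg),
      (forall X Y Z : {set T}, X \in Tg -> Y \in Tg -> Z \in Tg ->
          X :|: Y :|: Z <> ground M) &
      (forall e, e \in ground M -> ground M :\: [set e] \notin Tg)].

(* rank function of the tangle matroid M(Tg) (ground set E(M)):
   min { lambda(Y) : X <= Y in Tg } if some member contains X, else theta.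
   (Members have lambda < theta, so using theta as the neutral element of the
   minimum is exact.) *)
Definition tangle_rk (M : matroid) (theta : nat) (Tg : {set {set T}})
    (X : {set T}) : nat :=
  \big[minn/theta]_(Y in Tg | X \subset Y) conn M Y.

Definition closed_in (E : {set T}) (r : {set T} -> nat) (X : {set T}) : Prop :=
  X \subset E /\ forall e, e \in E :\: X -> r X < r (e |: X).

Definition long_line (E : {set T}) (r : {set T} -> nat) (X : {set T}) : Prop :=
  [/\ closed_in E r X, r X = 2 & 3 <= #|X|].

(* triangle: 3-element set X with M|X isomorphic to U_{2,3}, i.e. of rank 2
   with all 2-element subsets independent *)
Definition triangle_in (E : {set T}) (r : {set T} -> nat) (X : {set T}) : Prop :=
  [/\ X \subset E, #|X| = 3, r X = 2 &
      forall Y : {set T}, Y \subset X -> #|Y| = 2 -> r Y = 2].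

Definition triangle (M : matroid) (X : {set T}) : Prop :=
  triangle_in (ground M) (rk M) X.

Definition dual_rk (M : matroid) (X : {set T}) : nat :=
  #|X| + rk M (ground M :\: X) - mrank M.

Definition triad (M : matroid) (X : {set T}) : Prop :=
  triangle_in (ground M) (dual_rk M) X.

(* the triple {x_{i+1}, x_{i+2}, x_{i+3}} (0-based: positions i, i+1, i+2) *)
Definition triple (s : seq T) (i : nat) : {set T} :=
  [set x in take 3 (drop i s)].

Definition is_fan (M : matroid) (s : seq T) : Prop :=
  [/\ uniq s, {subset s <= ground M}, 3 <= size s,
      triangle M (triple s 0) \/ triad M (triple s 0) &
      forall i, i + 3 < size s ->
        (triangle M (triple s i) -> triad M (triple s i.+1)) /\
        (triad M (triple s i) -> triangle M (triple s i.+1))].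

Definition maximal_fan (M : matroid) (s : seq T) : Prop :=
  is_fan M s /\
  forall s', is_fan M s' -> {subset s <= s'} -> {subset s' <= s}.

End Matroids.

From mathcomp Require Import all_boot zify.
Set Implicit Arguments. Unset Strict Implicit. Unset Printing Implicit Defensive.

Section Sets.
Variable T : finType.
Implicit Types A B : {set T}.

Lemma setUDK A B : A \subset B -> A :|: B :\: A = B.
Proof. by move=> sAB; rewrite -{1}(setIidPr sAB) setID. Qed.

Lemma setDDK A B : A \subset B -> B :\: (B :\: A) = A.
Proof. by move=> sAB; rewrite setDDr setDv set0U (setIidPr sAB). Qed.

End Sets.

Section Rank.
Variables (T : finType) (M : matroid T).
Local Notation E := (ground M).
Local Notation rk := (rk M).

Lemma rk_set0 : rk set0 = 0.
Proof. by apply/eqP; rewrite -leqn0 -(cards0 T) rk_card ?sub0set. Qed.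

Lemma rk_le_mrank (X : {set T}) : X \subset E -> rk X <= mrank M.
Proof. by move=> sXE; apply: rk_mono. Qed.

Lemma rkU_le_card (X Z : {set T}) :
  X \subset E -> Z \subset E -> rk (X :|: Z) <= rk X + #|Z|.
Proof. by move=> sXE sZE; have := rk_submod sXE sZE; have := rk_card sZE; lia. Qed.

Lemma mrank_le_rk_compl (X : {set T}) : X \subset E -> mrank M <= rk X + rk (E :\: X).
Proof.
move=> sXE; have := rk_submod sXE (subsetDl E X).
by rewrite setUDK // setIDA setDIl setDv set0I rk_set0 addn0.
Qed.

Lemma conn_le_rk (X : {set T}) : X \subset E -> conn M X <= rk X.
Proof. by move=> sXE; rewrite /conn; have := rk_le_mrank (subsetDl E X); lia. Qed.

Lemma conn_compl (X : {set T}) : X \subset E -> conn M (E :\: X) = conn M X.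
Proof. by move=> sXE; rewrite /conn setDDK // addnC. Qed.

Lemma conn_submod (U V : {set T}) : U \subset E -> V \subset E ->
  conn M (U :|: V) + conn M (U :&: V) <= conn M U + conn M V.
Proof.
move=> sUE sVE; rewrite /conn.
have sUVE : U :|: V \subset E by rewrite subUset sUE.
have sIE : U :&: V \subset E by rewrite subIset ?sUE.
have := rk_submod sUE sVE; have := rk_submod (subsetDl E U) (subsetDl E V).
rewrite -setDIr -setDUr.
have := mrank_le_rk_compl sUVE; have := mrank_le_rk_compl sIE.
have := mrank_le_rk_compl sUE; have := mrank_le_rk_compl sVE; lia.
Qed.

(* Submodularity: if z is in the closure of S, it is in the closure of every U containing S. *)
Lemma rk_setU1_sup (S U : {set T}) (z : T) :
  S \subset U -> U \subset E -> z \in E ->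
  rk (z |: S) = rk S -> rk (z |: U) = rk U.
Proof.
move=> sSU sUE zE rkzS.
have szSE : z |: S \subset E by rewrite subUset sub1set zE (subset_trans sSU).
have := rk_submod szSE sUE; rewrite -setUA (setUidPr sSU).
have : rk S <= rk ((z |: S) :&: U).
  by apply: rk_mono; [rewrite subsetI subsetUr | rewrite subIset ?sUE ?orbT].
have : rk U <= rk (z |: U) by apply: rk_mono; rewrite ?subsetUr // subUset sub1set zE.
lia.
Qed.

Lemma rk_setU_cl (U Z : {set T}) : U \subset E -> Z \subset E ->
  (forall z, z \in Z -> rk (z |: U) = rk U) -> rk (U :|: Z) = rk U.
Proof.
move=> sUE sZE clZ; rewrite -(set_enum Z).
have : {subset enum Z <= Z} by move=> z; rewrite mem_enum.
elim: (enum Z) => [|z s IHs] sub_sZ; first by rewrite set_nil setU0.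
have zZ : z \in Z by apply: sub_sZ; rewrite mem_head.
have ssZ : {subset s <= Z} by move=> y ys; apply: sub_sZ; rewrite inE ys orbT.
have sUsE : U :|: [set:: s] \subset E.
  by rewrite subUset sUE; apply/subsetP=> y; rewrite inE => /ssZ /(subsetP sZE).
rewrite set_cons setUCA (@rk_setU1_sup U) ?subsetUl ?clZ ?IHs //.
exact: (subsetP sZE).
Qed.

Lemma rk_setU1_sub (W H : {set T}) (x : T) :
  W \subset H -> H \subset E -> x \in E ->
  rk H < rk (x |: H) -> rk (x |: W) = (rk W).+1.
Proof.
move=> sWH sHE xE ltH; have sWE := subset_trans sWH sHE.
have := rkU_le_card sWE (_ : [set x] \subset E); rewrite sub1set cards1 setUC => /(_ xE).
have : rk W <= rk (x |: W) by apply: rk_mono; rewrite ?subsetUr // subUset sub1set xE.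
case: (ltngtP (rk (x |: W)) (rk W)) => [| |eqW]; try lia.
have := rk_setU1_sup sWH sHE xE eqW; lia.
Qed.

End Rank.

Section Deletion.
Variables (T : finType) (M : matroid T).
Local Notation E := (ground M).

Lemma three_connected_del0 : three_connected M -> three_connected (mdel M set0).
Proof. by move=> h3M k X; rewrite /conn /mrank /= setD0; apply: h3M. Qed.

Lemma has_minor_del0 (N : matroid T) : has_minor M N -> has_minor (mdel M set0) N.
Proof. by case=> C [D [? ? ? ?]]; exists C, D; split; rewrite /= ?setD0. Qed.

Lemma conn_le_conn_del (D A : {set T}) : D \subset E -> A \subset E :\: D ->
  conn M A <= conn (mdel M D) A + #|D|.
Proof.
move=> sDE sAED; rewrite /conn /mrank /=.
have sAE : A \subset E := subset_trans sAED (subsetDl E D).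
have sBE : E :\: D :\: A \subset E := subset_trans (subsetDl _ _) (subsetDl E D).
have -> : E :\: A = (E :\: D :\: A) :|: D.
  apply/setP=> x; rewrite !inE; case: (boolP (x \in D)) => [xD|_]; last by rewrite orbF.
  by rewrite orbT (subsetP sDE x xD) andbT; apply: contraTN xD => /(subsetP sAED); rewrite inE => /andP[].
have := rkU_le_card sBE sDE.
have : rk M (E :\: D) <= rk M E by apply: rk_mono; rewrite ?subsetDl.
have := @mrank_le_rk_compl _ (mdel M D) A sAED; rewrite /mrank /=; lia.
Qed.

Lemma conn_del_le_of_rk (D D' A A' : {set T}) : D \subset D' ->
  rk M A' = rk M A -> rk M (E :\: D :\: A') = rk M (E :\: D' :\: A) ->
  conn (mdel M D) A' <= conn (mdel M D') A.
Proof.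
move=> sDD' rkA rkB; rewrite /conn /mrank /= rkA rkB.
have : rk M (E :\: D') <= rk M (E :\: D) by apply: rk_mono; rewrite ?setDS ?subsetDl.
lia.
Qed.

End Deletion.

Section Triangles.
Variables (T : finType) (M : matroid T).
Local Notation E := (ground M).

Lemma triangle_in_uniq (r : {set T} -> nat) (x p q : T) :
  triangle_in E r [set x; p; q] -> uniq [:: x; p; q].
Proof.
case=> _ card3 _ _; apply/card_uniqP; rewrite [size _]/= -card3 -cardsE.
by apply: eq_card => z; rewrite !inE orbA.
Qed.

Lemma triangle_cl (x p q : T) (U : {set T}) : triangle M [set x; p; q] ->
  p \in U -> q \in U -> U \subset E -> rk M (x |: U) = rk M U.
Proof.
move=> tri pU qU sUE; have := triangle_in_uniq tri; rewrite /= !inE => /and3P[_ neq_pq _].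
case: tri => sTE _ rkT rk2.
have spqT : [set p; q] \subset [set x; p; q] by rewrite -setUA subsetUr.
apply: (@rk_setU1_sup _ _ [set p; q]) => //.
- by apply/subsetP=> z; rewrite !inE => /orP[] /eqP ->.
- by apply: (subsetP sTE); rewrite !inE eqxx.
by rewrite setUA rkT rk2 // cards2 neq_pq.
Qed.

Lemma triad_hyperplane (Tr : {set T}) : triad M Tr -> (rk M (E :\: Tr)).+1 = mrank M.
Proof.
case=> _ card3 dualT _; have := rk_le_mrank (subsetDl E Tr).
by move: dualT; rewrite /dual_rk card3; lia.
Qed.

Lemma triad_spanning (Tr : {set T}) (x : T) : triad M Tr -> x \in Tr ->
  rk M (x |: (E :\: Tr)) = mrank M.
Proof.
case=> sTE card3 _ dual2 xT; have xE := subsetP sTE x xT.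
have card2 : #|Tr :\ x| = 2 by move: (cardsD1 x Tr); rewrite xT card3 => -[].
have := dual2 (Tr :\ x) (subsetDl _ _) card2; rewrite /dual_rk card2.
have -> : E :\: (Tr :\ x) = x |: (E :\: Tr).
  by rewrite setDDr (setIidPr _) ?sub1set // setUC.
have sxHE : x |: (E :\: Tr) \subset E by rewrite subUset sub1set xE subsetDl.
have := rk_le_mrank sxHE; lia.
Qed.

Lemma triad_indep (Tr Z : {set T}) (x : T) : triad M Tr -> x \in Tr ->
  Z \subset E :\: Tr -> rk M (x |: Z) = (rk M Z).+1.
Proof.
move=> triT xT sZ; have [sTE _ _ _] := triT.
have xE := subsetP sTE x xT.
apply: (rk_setU1_sub sZ (subsetDl E Tr) xE).
by rewrite (triad_spanning triT) // -(triad_hyperplane triT).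
Qed.

(* The other two elements of the triad form a series pair of M \ x, hence a 2-separation. *)
Lemma triad_del_not_three_connected (Tr : {set T}) (x : T) : triad M Tr -> x \in Tr ->
  5 <= #|E| -> ~ three_connected (mdel M [set x]).
Proof.
move=> triT xT cardE h3; have [sTE card3 _ _] := triT.
have card2 : #|Tr :\ x| = 2 by move: (cardsD1 x Tr); rewrite xT card3 => -[].
have [y yZ] : exists y, y \in Tr :\ x by apply/set0Pn; rewrite -card_gt0 card2.
have [yx yT] : y != x /\ y \in Tr by move: yZ; rewrite !inE => /andP.
have sZ : Tr :\ x \subset E :\: [set x] by rewrite setSD.
have eqB : E :\: [set x] :\: (Tr :\ x) = E :\: Tr by rewrite setDDl setD1K.
have := h3 2 (Tr :\ x) isT sZ; rewrite card2 /= eqB cardsD (setIidPr sTE) card3 => /(_ isT).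
have sxE : y |: (E :\: Tr) \subset E :\: [set x].
  by rewrite subUset sub1set !inE yx (subsetP sTE) //= setDS ?sub1set.
have := rk_mono sxE (subsetDl _ _); rewrite (triad_spanning triT yT).
have := triad_hyperplane triT; have := rk_card (subset_trans sZ (subsetDl _ _)).
rewrite card2 /conn /mrank /= eqB; lia.
Qed.

End Triangles.

Section Tangle.
Variables (T : finType) (M : matroid T) (theta : nat) (Tg : {set {set T}}).
Local Notation E := (ground M).
Local Notation trk := (tangle_rk M theta Tg).

Lemma tangle_rk_le (Z Y : {set T}) : Y \in Tg -> Z \subset Y -> trk Z <= conn M Y.
Proof.
move=> YTg sZY; rewrite /tangle_rk; elim: (index_enum _) (mem_index_enum Y) => // y s IHs.
rewrite inE big_cons => /predU1P[<-|Ys]; first by rewrite YTg sZY geq_minl.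
by case: ifP => _; rewrite ?geq_min IHs ?orbT.
Qed.

Lemma tangle_rk_le_theta (Z : {set T}) : trk Z <= theta.
Proof.
rewrite /tangle_rk; elim: (index_enum _) => [|y s IHs]; rewrite ?big_nil ?big_cons //.
by case: ifP; rewrite ?geq_min IHs ?orbT.
Qed.

Lemma tangle_rk_witness (Z : {set T}) : trk Z < theta ->
  exists Y, [/\ Y \in Tg, Z \subset Y & conn M Y <= trk Z].
Proof.
move=> ltZ; case: (boolP [exists Y in Tg, (Z \subset Y) && (conn M Y <= trk Z)]).
  by case/exists_inP=> Y YTg /andP[sZY leY]; exists Y.
rewrite negb_exists_in => /forall_inP noY.
suff : trk Z < trk Z by rewrite ltnn.
rewrite {2}/tangle_rk; apply: (big_ind (fun m => trk Z < m)) => // [m n ltm ltn|Y /andP[YTg sZY]].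
  by rewrite leq_min ltm.
by rewrite ltnNge; have := noY Y YTg; rewrite sZY.
Qed.

Hypothesis tangleTg : is_tangle M theta Tg.

Lemma tangle_sub (Y : {set T}) : Y \in Tg -> Y \subset E.
Proof. by case: tangleTg => memTg _ _ _ /memTg[]. Qed.

Lemma tangle_cover (Z : {set T}) : Z \subset E -> conn M Z < theta ->
  Z \in Tg \/ E :\: Z \in Tg.
Proof. by case: tangleTg => _ coverTg _ _; apply: coverTg. Qed.

Lemma tangle_card_compl (Y : {set T}) : Y \in Tg -> 2 <= #|E :\: Y|.
Proof.
move=> YTg; case: tangleTg => _ _ no3 no_cosingle; rewrite leqNgt ltnS leq_eqVlt ltnS leqn0.
apply/negP=> /orP[/cards1P[x eqx] | ].
  have xE : x \in E by move: (set11 x); rewrite -eqx inE => /andP[].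
  by move: (no_cosingle x xE); rewrite -eqx setDDK ?YTg // tangle_sub.
rewrite cards_eq0 setD_eq0 => sEY.
by apply: (no3 Y Y Y YTg YTg YTg); rewrite !setUid; apply/eqP; rewrite eqEsubset tangle_sub.
Qed.

Lemma tangle_setU (U V : {set T}) : U \in Tg -> V \in Tg -> conn M (U :|: V) < theta ->
  U :|: V \in Tg.
Proof.
move=> UTg VTg ltUV; have sUVE : U :|: V \subset E by rewrite subUset !tangle_sub.
case: (tangle_cover sUVE ltUV) => // WTg; case: tangleTg => _ _ no3 _.
by case: (no3 U V _ UTg VTg WTg); rewrite setUDK.
Qed.

End Tangle.

Section CoveredLines.
Variables (T : finType) (M : matroid T) (theta : nat) (Tg : {set {set T}}).
Variables (r : nat) (X Y : 'I_r -> {set T}).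
Local Notation E := (ground M).
Hypotheses (tangleTg : is_tangle M theta Tg) (h3M : three_connected M).
Hypotheses (YTg : forall i, Y i \in Tg) (connY : forall i, conn M (Y i) <= 2).
Hypotheses (sXY : forall i, X i \subset Y i).
Hypothesis trkX : tangle_rk M theta Tg (\bigcup_(i < r) X i) = 2 * r.

Lemma theta_ge_lines : 2 * r <= theta.
Proof. by rewrite -trkX tangle_rk_le_theta. Qed.

Lemma sYE i : Y i \subset E.
Proof. have := @tangle_sub _ _ _ _ tangleTg (Y i) (YTg i). by []. Qed.

(* By 3-connectivity, gluing Y i onto a member meeting it in two elements does not raise connectivity. *)
Lemma tangle_setU_lines (U : {set T}) (good : pred 'I_r) (s : seq 'I_r) :
  U \in Tg -> (forall i, good i -> 2 <= #|U :&: Y i|) ->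
  conn M U + 2 * count (predC good) s < theta ->
  U :|: \bigcup_(i <- s) Y i \in Tg /\
  conn M (U :|: \bigcup_(i <- s) Y i) <= conn M U + 2 * count (predC good) s.
Proof.
move=> UTg meet_good; elim: s => [|i s IHs] lt_s; first by rewrite big_nil setU0 UTg leq_addr.
have [WTg leW] : U :|: \bigcup_(j <- s) Y j \in Tg /\
    conn M (U :|: \bigcup_(j <- s) Y j) <= conn M U + 2 * count (predC good) s.
  by apply: IHs; move: lt_s => /=; lia.
rewrite big_cons setUCA setUC; set W := U :|: _ in WTg leW *.
have sWE := tangle_sub tangleTg WTg.
have submWY := conn_submod sWE (sYE i); have connYi := connY i.
have leWY : conn M (W :|: Y i) <= conn M U + 2 * count (predC good) (i :: s).
  rewrite /=; case: (boolP (good i)) => [gi|_] /=; last lia.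
  have : 2 <= conn M (W :&: Y i).
    apply: h3M; rewrite ?subIset ?sWE //.
      by apply: leq_trans (meet_good i gi) (subset_leq_card _); rewrite setSI ?subsetUl.
    apply: leq_trans (tangle_card_compl tangleTg (YTg i)) (subset_leq_card _).
    by rewrite setDS ?subsetIr.
  lia.
split=> //; apply: (tangle_setU tangleTg) => //; move: leWY lt_s; lia.
Qed.

Lemma conn_ge_meet_lines (U : {set T}) (P : {set 'I_r}) : U \in Tg ->
  (forall p, p \in P -> 2 <= #|U :&: Y p|) -> 2 * #|P| <= conn M U.
Proof.
move=> UTg meetP; rewrite leqNgt; apply/negP => ltU.
have cnt_bad : count (predC (mem P)) (index_enum 'I_r) = r - #|P|.
  rewrite (eq_count (a2 := mem (~: P))) => [|i]; last by rewrite !inE.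
  have -> : r - #|P| = #|~: P| by rewrite (cardsCs (~: P)) setCK card_ord.
  by rewrite cardE /enum_mem size_filter /index_enum; rewrite unlock.
have leP : #|P| <= r by have := max_card P; rewrite card_ord.
have ltW : conn M U + 2 * count (predC (mem P)) (index_enum 'I_r) < theta.
  by have := theta_ge_lines; lia.
have [WTg leW] := tangle_setU_lines UTg meetP ltW.
rewrite cnt_bad in leW.
have : 2 * r <= conn M (U :|: \bigcup_(i < r) Y i).
  rewrite -trkX; apply: tangle_rk_le => //; apply: subsetU; apply/orP; right.
  by apply/bigcupsP=> i _; apply: subset_trans (sXY i) (bigcup_sup _ _).
move/leq_trans/(_ leW); lia.
Qed.

Lemma lines_disjoint (i j : 'I_r) (x : T) : (forall i, 2 <= #|X i|) ->
  x \in X i -> x \in X j -> i = j.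
Proof.
move=> cardX xi xj; apply/eqP; apply: contraT => neq_ij.
have card_ij : #|[set i; j]| = 2 by rewrite cards2 neq_ij.
have : 2 <= r by have := max_card [set i; j]; rewrite card_ij card_ord.
have := theta_ge_lines; have := connY i; have := connY j.
have := conn_submod (sYE i) (sYE j).
have : 1 <= conn M (Y i :&: Y j).
  apply: h3M; rewrite ?subIset ?sYE //.
    by rewrite card_gt0; apply/set0Pn; exists x; rewrite inE (subsetP (sXY i)) ?(subsetP (sXY j)).
  apply: leq_trans (ltnW (tangle_card_compl tangleTg (YTg i))) (subset_leq_card _).
  by rewrite setDS ?subsetIl.
move=> ge1 submod leYj leYi ltheta ge_r.
have UTg : Y i :|: Y j \in Tg by apply: (tangle_setU tangleTg) => //; lia.
have := conn_ge_meet_lines UTg (P := [set i; j]); rewrite card_ij.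
suff /[swap]/[apply] : forall p, p \in [set i; j] -> 2 <= #|(Y i :|: Y j) :&: Y p| by lia.
move=> p; rewrite !inE => /orP[] /eqP ->; apply: leq_trans (cardX _) (subset_leq_card _);
  apply/subsetIP; split=> //; apply: subset_trans (sXY _) _; [exact: subsetUl | exact: subsetUr].
Qed.

Lemma card_ground_lines : (forall i, 3 <= #|X i|) -> 1 < r -> 6 <= #|E|.
Proof.
move=> card3 r_gt1; pose i0 : 'I_r := Ordinal (ltnW r_gt1); pose i1 : 'I_r := Ordinal r_gt1.
have cardX i : 2 <= #|X i| := ltnW (card3 i).
have dis01 : [disjoint X i0 & X i1].
  by rewrite -setI_eq0; apply/set0Pn=> -[x /setIP[x0 x1]]; have := lines_disjoint cardX x0 x1.
have := subset_leq_card (_ : X i0 :|: X i1 \subset E); rewrite cardsU (disjoint_setI0 dis01).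
rewrite cards0 subn0 subUset !(subset_trans (sXY _) (sYE _)) => /(_ isT).
by have := card3 i0; have := card3 i1; lia.
Qed.

Variable e : 'I_r -> T.
Hypothesis eX : forall i, e i \in X i.

Lemma eE i : e i \in E.
Proof. exact: subsetP (sYE i) _ (subsetP (sXY i) _ (eX i)). Qed.

Lemma split_side_in_tangle (P : {set 'I_r}) (A : {set T}) :
  1 < #|P| -> A \subset E :\: e @: P -> conn M A <= #|P|.+1 ->
  (forall p, p \in P -> exists2 y, y \in X p & y \in E :\: e @: P :\: A) -> A \in Tg.
Proof.
move=> P2 sA connA meetB; have sAE := subset_trans sA (subsetDl E (e @: P)).
have leP : #|P| <= r by have := max_card P; rewrite card_ord.
have ltA : conn M A < theta by have := theta_ge_lines; lia.
case: (tangle_cover tangleTg sAE ltA) => // CTg.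
suff : 2 * #|P| <= conn M (E :\: A) by rewrite conn_compl //; lia.
apply: conn_ge_meet_lines => // p pP; have [y yX] := meetB p pP.
rewrite !inE => /and3P[yA yEP yE]; apply/card_gt1P; exists (e p), y.
have epA : e p \notin A by apply/negP => /(subsetP sA); rewrite inE imset_f.
rewrite !inE epA yA yE eE (subsetP (sXY p)) //= (subsetP (sXY p)) //.
by split=> //; apply: contraNneq yEP => <-; rewrite imset_f.
Qed.

Lemma split_separation_false (P : {set 'I_r}) (A : {set T}) :
  1 < #|P| -> A \subset E :\: e @: P ->
  conn M A <= #|P|.+1 -> conn M (E :\: e @: P :\: A) <= #|P|.+1 ->
  (forall p, p \in P -> exists x y, [/\ x \in X p, x \in A, y \in X p & y \in E :\: e @: P :\: A]) ->
  False.
Proof.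
set EP := e @: P; set B := E :\: EP :\: A => P2 sA connA connB meetAB.
have sEP : EP \subset E by apply/subsetP=> _ /imsetP[p _ ->]; exact: eE.
have connEP : conn M EP <= #|P|.
  by rewrite (leq_trans (conn_le_rk sEP)) ?(leq_trans (rk_card sEP)) ?leq_imset_card.
have leP : #|P| <= r by have := max_card P; rewrite card_ord.
have ltEP : conn M EP < theta by have := theta_ge_lines; lia.
case: (tangle_cover tangleTg sEP ltEP) => [EPTg|CTg].
  have ATg : A \in Tg.
    by apply: (@split_side_in_tangle P) => // p /meetAB[x [y [? ? ? ?]]]; exists y.
  have BTg : B \in Tg.
    apply: (@split_side_in_tangle P); rewrite ?subsetDl // => p /meetAB[x [y [? ? ? ?]]].
    by exists x; rewrite // setDDK.
  case: tangleTg => _ _ no3 _; apply: (no3 A B EP ATg BTg EPTg).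
  by rewrite setUDK // setUC setUDK.
suff : 2 * #|P| <= conn M (E :\: EP) by rewrite conn_compl //; lia.
apply: conn_ge_meet_lines => // p /meetAB[x [y [xX xA yX yB]]].
apply/card_gt1P; exists x, y; rewrite !inE.
rewrite (subsetP (sXY p) _ xX) (subsetP (sXY p) _ yX) !andbT.
move: (subsetP sA x xA) yB; rewrite !inE => /andP[-> ->] /and3P[yA -> ->].
by split=> //; apply: contraNneq yA => <-.
Qed.

Hypothesis cardX : forall i, 2 <= #|X i|.
Variables a b : 'I_r -> T.
Hypothesis triX : forall i, triangle M [set e i; a i; b i].
Hypotheses (aX : forall i, a i \in X i) (bX : forall i, b i \in X i).

Lemma e_inj : injective e.
Proof. by move=> i j eij; apply: (@lines_disjoint _ _ (e i)); rewrite // eij. Qed.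

Lemma notin_imset_e (i : 'I_r) (x : T) :
  x \in X i -> x != e i -> x \notin [set e j | j : 'I_r].
Proof.
move=> xi; apply: contraNN => /imsetP[j _ xj].
have xj' : x \in X j by rewrite xj eX.
by rewrite xj (lines_disjoint cardX xi xj').
Qed.

Lemma abE' i :
  [/\ a i \in E, a i \notin [set e j | j : 'I_r], b i \in E & b i \notin [set e j | j : 'I_r]].
Proof.
have := triangle_in_uniq (triX i); rewrite /= !inE => /and3P[/norP[ea eb] _ _].
have inE' x : x \in X i -> x \in E by move=> xi; apply: subsetP (sYE i) _ (subsetP (sXY i) _ xi).
by split; rewrite ?inE' // (notin_imset_e (aX i), notin_imset_e (bX i)) // eq_sym.
Qed.

Lemma rk_setU_apexes (S : {set T}) (I : {set 'I_r}) : S \subset E ->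
  (forall i, i \in I -> a i \in S /\ b i \in S) -> rk M (S :|: e @: I) = rk M S.
Proof.
move=> sSE abS; apply: rk_setU_cl => // [|_ /imsetP[i iI ->]].
  by apply/subsetP=> _ /imsetP[i _ ->]; exact: eE.
by have [aS bS] := abS i iI; exact: triangle_cl (triX i) aS bS sSE.
Qed.

(* Each deleted apex whose base lies on one side of a separation is put back on that side; only the apexes of split triangles stay deleted. *)
Lemma restore_separation (A : {set T}) : A \subset E :\: [set e i | i : 'I_r] ->
  exists (P : {set 'I_r}) (A' : {set T}), [/\ A \subset A', E :\: [set e i | i : 'I_r] :\: A \subset E :\: e @: P :\: A',
    A' \subset E :\: e @: P,
    conn (mdel M (e @: P)) A' <= conn (mdel M [set e i | i : 'I_r]) A &
    forall p, p \in P ->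
      exists x y, [/\ x \in X p, x \in A', y \in X p & y \in E :\: e @: P :\: A']].
Proof.
set E' := [set e i | i : 'I_r]; set B := E :\: E' :\: A => sA.
pose IA := [set i | [set a i; b i] \subset A].
pose IB := [set i | [set a i; b i] \subset B].
pose P := ~: (IA :|: IB).
have sAE : A \subset E := subset_trans sA (subsetDl _ _).
have sBE : B \subset E := subset_trans (subsetDl _ _) (subsetDl _ _).
have sDE' (S : {set 'I_r}) : e @: S \subset E' by apply: imsetS; apply/subsetP.
have mem_e (S : {set 'I_r}) i : (e i \in e @: S) = (i \in S) := mem_imset S i e_inj.
have eE' i : e i \in E' by apply: imset_f.
have eA i : e i \notin A by apply/negP => /(subsetP sA); rewrite inE eE'.
have eB i : e i \notin B by rewrite /B !inE eE' andbF.
have IAB i : i \in IA -> (i \in IB) = false.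
  by rewrite !inE !subUset !sub1set => /andP[aA _]; rewrite /B inE aA.
have eqB' : E :\: e @: P :\: (A :|: e @: IA) = B :|: e @: IB.
  apply/setP=> z; case: (boolP (z \in E')) => [/imsetP[i _ ->]|zE'].
    rewrite !in_setD !in_setU !mem_e (negbTE (eA i)) (negbTE (eB i)) eE in_setC in_setU /=.
    by case: (boolP (i \in IA)) => [/IAB -> | _] /=; rewrite ?negbK ?andbT.
  have notin_e (S : {set 'I_r}) : z \notin e @: S by apply: contra zE'; apply: subsetP.
  by rewrite !in_setD !in_setU !(negbTE (notin_e _)) /B !inE zE' !orbF.
exists P, (A :|: e @: IA); split.
- exact: subsetUl.
- by rewrite eqB' subsetUl.
- apply/subsetP=> z; rewrite in_setU => /orP[zA | /imsetP[i iA ->]].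
    move: (subsetP sA z zA); rewrite !inE => /andP[zE' ->]; rewrite andbT.
    by apply: contra zE'; apply: subsetP.
  by rewrite !inE mem_e in_setC in_setU iA eE.
- apply: conn_del_le_of_rk; first exact: sDE'.
    by apply: rk_setU_apexes => // i; rewrite inE subUset !sub1set => /andP.
  by rewrite eqB' rk_setU_apexes // => i; rewrite inE subUset !sub1set => /andP.
move=> p; rewrite in_setC in_setU negb_or !inE !subUset !sub1set => /andP[nA nB].
have [aE aE' bE bE'] := abE' p.
have AorB z : z \in E -> z \notin E' -> (z \in A) || (z \in B).
  by move=> zE zE'; rewrite /B !inE zE zE'; case: (z \in A).
have sBB' : B \subset E :\: e @: P :\: (A :|: e @: IA) by rewrite eqB' subsetUl.
case: (boolP (a p \in A)) => aA.
  have bB : b p \in B by move: (AorB _ bE bE') nA; rewrite aA /=; case: (b p \in A).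
  by exists (a p), (b p); split; [exact: aX | by rewrite inE aA | exact: bX | exact: subsetP sBB' _ bB].
have aB : a p \in B by move: (AorB _ aE aE'); rewrite (negbTE aA).
have bA : b p \in A by move: (AorB _ bE bE') nB; rewrite aB /=; case: (b p \in B) => //=; rewrite orbF.
by exists (b p), (a p); split; [exact: bX | by rewrite inE bA | exact: aX | exact: subsetP sBB' _ aB].
Qed.

Lemma three_connected_del_apexes :
  (forall i, three_connected (mdel M [set e i])) ->
  three_connected (mdel M [set e i | i : 'I_r]).
Proof.
move=> h3e k A k12 sA kA kB; rewrite leqNgt; apply/negP => ltA.
have [P [A' [sAA' sBB' sA'E connA' splitP]]] := restore_separation sA.
have {connA' ltA} ltA' := leq_ltn_trans connA' ltA.
have kA' : k <= #|A'| := leq_trans kA (subset_leq_card sAA').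
have kB' : k <= #|E :\: e @: P :\: A'| := leq_trans kB (subset_leq_card sBB').
case: (leqP #|P| 1) => [leP1|ltP].
  have h3P : three_connected (mdel M (e @: P)).
    move: leP1; rewrite leq_eqVlt ltnS leqn0 => /orP[/cards1P[j ->]|/eqP/cards0_eq ->].
      by rewrite imset_set1.
    by rewrite imset0; exact: three_connected_del0.
  by have := h3P k A' k12 sA'E kA' kB'; rewrite leqNgt ltA'.
have sEP : e @: P \subset E by apply/subsetP=> _ /imsetP[p _ ->]; exact: eE.
have cardEP : #|e @: P| <= #|P| := leq_imset_card e P.
have connA'1 : conn (mdel M (e @: P)) A' <= 1.
  by case/andP: k12 => _ k2; rewrite -ltnS (leq_trans ltA').
have conn_le (Z : {set T}) : Z \subset E :\: e @: P ->
    conn (mdel M (e @: P)) Z <= 1 -> conn M Z <= #|P|.+1.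
  move=> sZ connZ; apply: leq_trans (conn_le_conn_del sEP sZ) _.
  by rewrite -addn1 addnC leq_add.
apply: (split_separation_false ltP sA'E) => //; first exact: conn_le.
by apply: conn_le; rewrite ?subsetDl // (@conn_compl _ (mdel M (e @: P))).
Qed.

End CoveredLines.

Section Minors.
Variables (T : finType) (M N : matroid T).
Local Notation E := (ground M).

Definition minor_via (C D : {set T}) : Prop :=
  [/\ [disjoint C & D], C :|: D \subset E, ground N = E :\: (C :|: D) &
      forall X : {set T}, X \subset ground N -> rk N X = rk M (X :|: C) - rk M C].

Lemma minor_via_transfer (C D C' D' : {set T}) (k : nat) :
  minor_via C D -> [disjoint C' & D'] -> C' :|: D' = C :|: D ->
  (forall W : {set T}, W \subset ground N -> rk M (W :|: C') = rk M (W :|: C) + k) ->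
  minor_via C' D'.
Proof.
case=> _ sCDE eqN rkN disC' eqCD' rkW; split; rewrite ?eqCD' // => W sW.
have := rkW set0 (sub0set _); rewrite !set0U => rkC'.
by rewrite rkN // rkW // rkC' subnDr.
Qed.

Section Moves.
Variables (C D : {set T}).
Hypothesis CD : minor_via C D.

Lemma minor_via_sub (W : {set T}) : W \subset ground N -> W :|: C \subset E.
Proof.
case: CD => _ sCDE eqN _ sW; rewrite subUset (subset_trans sW) ?eqN ?subsetDl //.
exact: subset_trans (subsetUl C D) sCDE.
Qed.

Lemma minor_via_notin (W : {set T}) (z : T) : W \subset ground N -> z \in C :|: D -> z \notin W.
Proof.
by case: CD => _ _ eqN _ sW zCD; apply: contraL zCD => /(subsetP sW); rewrite eqN inE => /andP[].
Qed.

Lemma minor_via_disj z : z \in C -> (z \in D) = false.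
Proof. by case: CD => disCD _ _ _ zC; rewrite (disjointFr disCD zC). Qed.

Lemma minor_via_uncontract z : z \in C ->
  (forall W : {set T}, W \subset ground N -> rk M (W :|: C :\ z) = rk M (W :|: C)) ->
  minor_via (C :\ z) (z |: D).
Proof.
move=> zC rkW; apply: (minor_via_transfer (k := 0) CD) => [| |W sW]; last by rewrite rkW ?addn0.
  rewrite -setI_eq0; apply/eqP/setP=> x; rewrite !inE.
  by case: eqVneq => //= _; case: (boolP (x \in C)) => // /minor_via_disj ->.
by rewrite setUCA setUA setD1K.
Qed.

Lemma minor_via_contract z : z \in D ->
  (forall W : {set T}, W \subset ground N -> rk M (W :|: (z |: C)) = (rk M (W :|: C)).+1) ->
  minor_via (z |: C) (D :\ z).
Proof.
move=> zD rkW; apply: (minor_via_transfer (k := 1) CD) => [| |W sW]; last by rewrite rkW ?addn1.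
  rewrite -setI_eq0; apply/eqP/setP=> x; rewrite !inE.
  by case: eqVneq => //= _; case: (boolP (x \in C)) => // /minor_via_disj ->.
by rewrite setUAC setD1K // setUC.
Qed.

Lemma minor_via_exchange z y : z \in C -> y \in D ->
  (forall W : {set T}, W \subset ground N -> rk M (W :|: (y |: C :\ z)) = rk M (W :|: C)) ->
  minor_via (y |: C :\ z) (z |: D :\ y).
Proof.
move=> zC yD rkW; have yz : (y == z) = false.
  by apply/negbTE; apply: contraTneq yD => ->; rewrite minor_via_disj.
apply: (minor_via_transfer (k := 0) CD) => [| |W sW]; last by rewrite rkW ?addn0.
  rewrite -setI_eq0; apply/eqP/setP=> x; rewrite !inE.
  case: (eqVneq x y) => [->|_]; first by rewrite yz.
  by case: eqVneq => //= _; case: (boolP (x \in C)) => // /minor_via_disj ->.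
apply/setP=> x; rewrite !inE; case: (eqVneq x y) => [->|_]; first by rewrite yD !orbT.
by case: (eqVneq x z) => [->|_]; rewrite ?zC.
Qed.

Lemma minor_via_memE z : z \in C :|: D -> z \in E.
Proof. by case: CD => _ sCDE _ _; apply: subsetP. Qed.

Lemma minor_via_apex_out (e a b : T) : triangle M [set e; a; b] ->
  e \in C -> a \in C -> b \in C :|: D ->
  exists C' D', [/\ minor_via C' D', e \in D' &
    forall z, z \notin [set e; b] -> (z \in D') = (z \in D)].
Proof.
move=> tri eC aC bCD; have := triangle_in_uniq tri.
rewrite /= !inE negb_or => /and3P[/andP[ea eb] ab _].
case/setUP: bCD => [bC|bD].
  exists (C :\ e), (e |: D); split; last by move=> z; rewrite !inE => /norP[/negbTE ->].
    apply: minor_via_uncontract => // W sW.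
    have -> : W :|: C = e |: (W :|: C :\ e) by rewrite setUCA setD1K.
    have aW : a \in W :|: C :\ e by rewrite !inE eq_sym ea aC orbT.
    have bW : b \in W :|: C :\ e by rewrite !inE eq_sym eb bC orbT.
    by rewrite (triangle_cl tri aW bW) // (subset_trans _ (minor_via_sub sW)) // setUS ?subsetDl.
  by rewrite setU11.
exists (b |: C :\ e), (e |: D :\ b); split; last 1 first.
- by move=> z; rewrite !inE => /norP[/negbTE -> /negbTE ->].
- apply: minor_via_exchange => // W sW; have sWCE := minor_via_sub sW.
  have bE : b \in E by apply: minor_via_memE; rewrite inE bD orbT.
  have aU : a \in W :|: (b |: C :\ e) by rewrite !inE (eq_sym a e) ea aC !orbT.
  have bU : b \in W :|: (b |: C :\ e) by rewrite !inE eqxx orbT.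
  have sUE : W :|: (b |: C :\ e) \subset E.
    by rewrite setUCA subUset sub1set bE (subset_trans _ sWCE) // setUS ?subsetDl.
  rewrite -(triangle_cl tri aU bU sUE).
  have -> : e |: (W :|: (b |: C :\ e)) = b |: (W :|: C).
    apply/setP=> x; rewrite !inE; case: eqVneq => [->|_] /=; first by rewrite eC !orbT.
    by rewrite orbCA.
  have tri' : triangle M [set b; e; a] by rewrite -setUA setUC.
  by rewrite (triangle_cl tri') // !inE ?eC ?aC ?orbT.
- by rewrite setU11.
Qed.

Lemma minor_via_base_in (e a b c : T) : triad M [set a; b; c] ->
  e \in C -> e != c -> a \in D -> b \in D -> c \in C :|: D ->
  exists C' D', [/\ minor_via C' D', e \in C', a \in C', b \in D' &
    forall z, z \notin [set a; c] -> (z \in D') = (z \in D)].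
Proof.
move=> triT eC ec aD bD cCD.
have := triangle_in_uniq triT; rewrite /= !inE negb_or => /and3P[/andP[ab ac] bc _].
have sH (S W : {set T}) : W \subset ground N -> S \subset C -> c \notin S ->
    W :|: S \subset E :\: [set a; b; c].
  move=> sW sSC cS; apply/subsetP=> x xWS; rewrite inE.
  rewrite (subsetP (subset_trans (setUS _ sSC) (minor_via_sub sW)) x xWS) andbT.
  apply/negP=> xabc; have xCD : x \in C :|: D.
    by case/setUP: xabc => [/set2P[]|/set1P] ->; rewrite // inE ?aD ?bD orbT.
  have xS : x \in S by case/setUP: xWS => // xW; move: (minor_via_notin sW xCD); rewrite xW.
  have /minor_via_disj xD := subsetP sSC x xS.
  by case/setUP: xabc => [/set2P[]|/set1P] xabc; move: aD bD cS; rewrite -xabc ?xD ?xS.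
have cT : c \in [set a; b; c] by rewrite !inE eqxx orbT.
have aT : a \in [set a; b; c] by rewrite !inE eqxx.
have bC : b \in D :\ a by rewrite !inE eq_sym ab.
case/setUP: cCD => [cC|cD].
  exists (a |: C :\ c), (c |: D :\ a); split.
  - apply: minor_via_exchange => // W sW.
    have sWC := sH _ W sW (subsetDl C [set c]) (negbT (setD11 c C)).
    have -> : W :|: C = c |: (W :|: C :\ c) by rewrite setUCA setD1K.
    by rewrite setUCA !(triad_indep triT).
  - by rewrite !inE ec eC orbT.
  - exact: setU11.
  - by rewrite inE bC orbT.
  - by move=> z; rewrite !inE => /norP[/negbTE -> /negbTE ->].
have cC : c \notin C by apply: contraL cD => /minor_via_disj ->.
exists (a |: C), (D :\ a); split.
- apply: minor_via_contract => // W sW.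
  by rewrite setUCA (triad_indep triT) // sH.
- by rewrite !inE eC orbT.
- exact: setU11.
- exact: bC.
by move=> z; rewrite !inE => /norP[/negbTE ->].
Qed.

End Moves.
Lemma minor_via_delete_apex (C D : {set T}) (e a b c : T) : minor_via C D ->
  triangle M [set e; a; b] -> triad M [set a; b; c] -> e != c ->
  [set e; a; b; c] \subset C :|: D ->
  exists C' D', [/\ minor_via C' D', e \in D' &
    forall z, z \notin [set e; a; b; c] -> (z \in D') = (z \in D)].
Proof.
move=> CD tri triT ec sCD; set U := [set e; a; b; c].
have inCD x : x \in U -> x \in C :|: D := subsetP sCD x.
have [eCD aCD bCD cCD] : [/\ e \in C :|: D, a \in C :|: D, b \in C :|: D & c \in C :|: D].
  by split; apply: inCD; rewrite !inE eqxx ?orbT.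
have outU (S : {set T}) z : S \subset U -> z \notin U -> z \notin S.
  by move=> sSU; apply: contra; apply: subsetP.
have sebU : [set e; b] \subset U by apply/subsetP=> x; rewrite !inE => /orP[] ->; rewrite ?orbT.
have seaU : [set e; a] \subset U by apply/subsetP=> x; rewrite !inE => /orP[] ->; rewrite ?orbT.
have sacU : [set a; c] \subset U by apply/subsetP=> x; rewrite !inE => /orP[] ->; rewrite ?orbT.
have [eD|eD] := boolP (e \in D); first by exists C, D.
have eC : e \in C by move: eCD; rewrite inE (negbTE eD) orbF.
have [aC|aC] := boolP (a \in C).
  have [C' [D' [CD' eD' agr]]] := minor_via_apex_out CD tri eC aC bCD.
  by exists C', D'; split=> // z /(outU _ _ sebU); apply: agr.
have aD : a \in D by move: aCD; rewrite inE (negbTE aC).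
have [bC|bC] := boolP (b \in C).
  have tri' : triangle M [set e; b; a] by rewrite setUAC.
  have [C' [D' [CD' eD' agr]]] := minor_via_apex_out CD tri' eC bC aCD.
  by exists C', D'; split=> // z /(outU _ _ seaU); apply: agr.
have bD : b \in D by move: bCD; rewrite inE (negbTE bC).
have [C1 [D1 [CD1 eC1 aC1 bD1 agr1]]] := minor_via_base_in CD triT eC ec aD bD cCD.
have bCD1 : b \in C1 :|: D1 by rewrite inE bD1 orbT.
have [C' [D' [CD' eD' agr']]] := minor_via_apex_out CD1 tri eC1 aC1 bCD1.
exists C', D'; split=> // z zU.
by rewrite agr' ?agr1 ?(outU _ _ sebU) ?(outU _ _ sacU).
Qed.

Lemma minor_via_has_minor_del (C D S : {set T}) : minor_via C D -> S \subset D ->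
  has_minor (mdel M S) N.
Proof.
move=> CD sSD; have [disCD sCDE eqN rkN] := CD; exists C, (D :\: S); split=> //.
- exact: disjointWr (subsetDl D S) disCD.
- apply/subsetP=> x; rewrite !inE => /orP[xC|/andP[-> xD]]; last first.
    by rewrite (subsetP sCDE) // inE xD orbT.
  rewrite (subsetP sCDE) ?inE ?xC // andbT; apply: contraL xC => /(subsetP sSD).
  by apply: contraL => /minor_via_disj ->.
- apply/setP=> x; rewrite eqN !inE.
  by case: (boolP (x \in S)) => [/(subsetP sSD) ->|]; rewrite ?orbT ?andbF.
Qed.

Lemma has_minor_del_apexes (r : nat) (X : 'I_r -> {set T}) (e a b c : 'I_r -> T) :
  has_minor M N -> (forall i, X i \subset E) -> (forall i, [disjoint X i & ground N]) ->
  (forall i j x, x \in X i -> x \in X j -> i = j) ->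
  (forall i, [/\ triangle M [set e i; a i; b i], triad M [set a i; b i; c i], e i != c i &
     [set e i; a i; b i; c i] \subset X i]) ->
  has_minor (mdel M [set e i | i : 'I_r]) N.
Proof.
move=> [C0 [D0 CD0]] sXE disXN disX fanX.
have eX i : e i \in X i by have [_ _ _ /subsetP] := fanX i; apply; rewrite !inE eqxx.
suff [C [D [CD eD]]] : exists C D, minor_via C D /\ forall i, i \in index_enum 'I_r -> e i \in D.
  apply: (minor_via_has_minor_del CD); apply/subsetP=> _ /imsetP[i _ ->].
  exact: eD (mem_index_enum i).
elim: (index_enum 'I_r) => [|i s [C [D [CD eD]]]]; first by exists C0, D0.
have [tri triT ec sUX] := fanX i.
have sUCD : [set e i; a i; b i; c i] \subset C :|: D.
  have [_ _ eqN _] := CD; apply/subsetP=> x /(subsetP sUX) xX.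
  have := disjointFr (disXN i) xX; rewrite eqN inE (subsetP (sXE i)) // andbT.
  by move/negbFE.
have [C' [D' [CD' eD' agr]]] := minor_via_delete_apex CD tri triT ec sUCD.
exists C', D'; split=> // j; rewrite inE => /predU1P[-> // | js].
have [-> //|ji] := eqVneq j i; rewrite agr ?eD //.
by apply: contra ji => /(subsetP sUX) /(disX _ _ _ (eX j)) ->.
Qed.

End Minors.

Section Fans.
Variables (T : finType) (M : matroid T) (s : seq T).
Hypothesis fan_s : is_fan M s.

Lemma set3_rot (a b c : T) : [set a; b; c] = [set b; c; a].
Proof. by apply/setP=> z; rewrite !inE -orbA orbC. Qed.

Lemma triple_nth (x0 : T) i : i + 3 <= size s ->
  triple s i = [set nth x0 s i; nth x0 s i.+1; nth x0 s i.+2].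
Proof.
move=> ltis; rewrite /triple (drop_nth x0) ?(drop_nth x0 (n := i.+1)) ?(drop_nth x0 (n := i.+2));
  try lia.
by apply/setP=> z; rewrite /= !inE take0 in_nil orbF -orbA.
Qed.

Lemma mem_triple (x0 : T) i j : i + 3 <= size s -> i <= j <= i + 2 ->
  nth x0 s j \in triple s i.
Proof.
move=> ltis lij; rewrite (triple_nth x0 ltis) !inE.
have : (j == i) || (j == i.+1) || (j == i.+2) by lia.
by case/orP=> [/orP[]|] /eqP ->; rewrite eqxx ?orbT.
Qed.

Lemma fan_triple i : i + 3 <= size s -> triangle M (triple s i) \/ triad M (triple s i).
Proof.
case: fan_s => _ _ _ alt0 alt; elim: i => [|i IHi] lt_is //.
have [tri_triad triad_tri] := alt i ltac:(lia).
by case: (IHi ltac:(lia)) => [/tri_triad|/triad_tri]; [right | left].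
Qed.

Variable x : T.
Hypothesis x_notin_triad : forall Tr, triad M Tr -> x \notin Tr.

Lemma fan_triple_triangle i : i + 3 <= size s -> x \in triple s i -> triangle M (triple s i).
Proof. by move=> lt_is xi; case: (fan_triple lt_is) => // /x_notin_triad; rewrite xi. Qed.

(* Consecutive triples alternate, so x lies in at most one of them. *)
Lemma fan_triple_succ_notin i : i + 4 <= size s -> x \in triple s i -> x \notin triple s i.+1.
Proof.
case: fan_s => _ _ _ _ alt lt_is xi; have lt3 : i + 3 < size s by lia.
exact/x_notin_triad/(alt i lt3).1/(fan_triple_triangle (ltnW lt3) xi).
Qed.

(* An element of a fan of length at least four lying in no triad is an end of the fan. *)
Lemma fan_end_triangle_triad : 4 <= size s -> x \in s ->
  exists a b c, [/\ triangle M [set x; a; b], triad M [set a; b; c], x != c &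
    [/\ a \in s, b \in s & c \in s]].
Proof.
move=> ge4 xs; have [uniq_s _ _ _ alt] := fan_s.
have ltm : index x s < size s by rewrite index_mem.
move: (index x s) ltm (nth_index x xs) => m ltm xm.
have nth_s j : j < size s -> nth x s j \in s := @mem_nth _ x s j.
have neq j k : j < size s -> k < size s -> j != k -> nth x s j != nth x s k.
  by move=> *; rewrite nth_uniq.
have in_triple i : i + 3 <= size s -> i <= m <= i + 2 -> x \in triple s i.
  by move=> *; rewrite -xm mem_triple.
have [m0|m0] := posnP m.
  have le3 : 0 + 3 <= size s by lia.
  have tri0 : triangle M (triple s 0).
    by apply: (fan_triple_triangle le3); apply: in_triple => //; rewrite m0.
  have triad1 := (alt 0 ge4).1 tri0.
  have x0 : nth x s 0 = x by rewrite -m0.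
  rewrite (triple_nth x le3) x0 in tri0; rewrite (triple_nth x) // in triad1.
  exists (nth x s 1), (nth x s 2), (nth x s 3); split=> //; last by split; apply: nth_s; lia.
  by rewrite -{1}x0 neq //; lia.
case: (ltnP m (size s).-1) => [mn|nm].
  have [i [lt_in im]] : exists i, i + 4 <= size s /\ i.+1 <= m <= i + 2.
    by case: (leqP (m + 3) (size s)) => h; [exists m.-1 | exists m.-2]; lia.
  have /fan_triple_succ_notin : x \in triple s i by apply: in_triple; lia.
  by rewrite in_triple //; lia.
have [i si] : exists i, size s = i + 4 by exists (size s - 4); lia.
have mi : m = i.+3 by lia.
have tri : triangle M (triple s i.+1).
  by apply: fan_triple_triangle; [lia | apply: in_triple; lia].
have triad0 : triad M (triple s i).
  have lt4 : i + 3 < size s by lia.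
  case: (fan_triple (i := i) (ltnW lt4)) => // /(alt i lt4).1 /x_notin_triad.
  by rewrite in_triple //; lia.
rewrite !(triple_nth x) -?mi ?xm in tri triad0; try lia.
exists (nth x s i.+1), (nth x s i.+2), (nth x s i); split.
- by rewrite set3_rot.
- by rewrite -set3_rot.
- by rewrite -{1}xm mi neq //; lia.
by split; apply: nth_s; lia.
Qed.

End Fans.

Lemma fan_apex_triangle_triad (T : finType) (M : matroid T) (s : seq T) (x : T) :
  is_fan M s -> 4 <= size s -> x \in s -> 5 <= #|ground M| ->
  three_connected (mdel M [set x]) ->
  exists a b c, [/\ triangle M [set x; a; b], triad M [set a; b; c], x != c &
    [/\ a \in s, b \in s & c \in s]].
Proof.
move=> fan_s ge4 xs cardE h3x; apply: fan_end_triangle_triad => // Tr triT.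
by apply/negP=> xT; exact: triad_del_not_three_connected triT xT cardE h3x.
Qed.

Lemma del_apexes_le1 (T : finType) (M N : matroid T) (r : nat) (e : 'I_r -> T) : r < 2 ->
  three_connected M -> has_minor M N ->
  (forall i, three_connected (mdel M [set e i]) /\ has_minor (mdel M [set e i]) N) ->
  three_connected (mdel M [set e i | i : 'I_r]) /\ has_minor (mdel M [set e i | i : 'I_r]) N.
Proof.
case: r e => [|[|//]] e _ h3M minorN delF.
  have -> : [set e i | i : 'I_0] = set0 by apply/setP=> x; rewrite inE; apply/imsetP=> -[[]].
  by split; [exact: three_connected_del0 | exact: has_minor_del0].
have -> : [set e i | i : 'I_1] = [set e ord0].
  by apply/setP=> x; rewrite inE; apply/imsetP/eqP=> [[i _ ->]|->]; [rewrite ord1 | exists ord0].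
exact: delF.
Qed.

Unset Implicit Arguments. Set Strict Implicit.

Theorem lemma3p4 (T : finType) (M N : matroid T) (theta : nat)
    (Tg : {set {set T}}) (r : nat) (X : 'I_r -> {set T})
    (F : 'I_r -> seq T) (e : 'I_r -> T) :
  three_connected M ->
  is_tangle M theta Tg ->
  has_minor M N ->
  (forall i, long_line (ground M) (tangle_rk M theta Tg) (X i)) ->
  tangle_rk M theta Tg (\bigcup_(i < r) X i) = 2 * r ->
  (forall i, [disjoint X i & ground N]) ->
  (forall i, maximal_fan M (F i) /\ 4 <= size (F i) /\ {subset F i <= X i}) ->
  (forall i, e i \in F i /\
     three_connected (mdel M [set e i]) /\ has_minor (mdel M [set e i]) N) ->
  three_connected (mdel M [set e i | i : 'I_r]) /\
  has_minor (mdel M [set e i | i : 'I_r]) N.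
Proof.
move=> h3M tangleTg minorN lineX trkX disXN fanF eF.
have [r_lt2|r_ge2] := ltnP r 2.
  by apply: del_apexes_le1 => // i; case: (eF i) => _.
have ltheta := theta_ge_lines trkX.
have /fin_all_exists[Y coverY] : forall i, exists Y,
    [/\ Y \in Tg, X i \subset Y & conn M Y <= 2].
  move=> i; have [_ trk2 _] := lineX i.
  have lt_trk : tangle_rk M theta Tg (X i) < theta by rewrite trk2; lia.
  by have := tangle_rk_witness lt_trk; rewrite trk2.
have YTg i : Y i \in Tg by case: (coverY i).
have sXY i : X i \subset Y i by case: (coverY i).
have connY i : conn M (Y i) <= 2 by case: (coverY i).
have card3 i : 3 <= #|X i| by case: (lineX i).
have cardX i : 2 <= #|X i| := ltnW (card3 i).
have cardE := card_ground_lines tangleTg h3M YTg connY sXY trkX card3 r_ge2.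
have /fin_all_exists[abc fanX] : forall i, exists abc : T * T * T,
    [/\ triangle M [set e i; abc.1.1; abc.1.2], triad M [set abc.1.1; abc.1.2; abc.2],
        e i != abc.2 & [set e i; abc.1.1; abc.1.2; abc.2] \subset X i].
  move=> i; have [[[fanFi _] [ge4 sFX]] [eFi [h3e _]]] := (fanF i, eF i).
  have [a [b [c [tri triT ec [aF bF cF]]]]] := fan_apex_triangle_triad fanFi ge4 eFi (ltnW cardE) h3e.
  exists (a, b, c); split=> //; apply/subsetP=> x.
  by rewrite !inE -!orbA => /or4P[] /eqP ->; apply: sFX.
have eX i : e i \in X i by have [_ _ _ /subsetP] := fanX i; apply; rewrite !inE eqxx.
split.
  apply: (three_connected_del_apexes tangleTg h3M YTg connY sXY trkX eX cardX
    (a := fun i => (abc i).1.1) (b := fun i => (abc i).1.2)) => i; first by case: (fanX i).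
  - by have [_ _ _ /subsetP] := fanX i; apply; rewrite !inE eqxx orbT.
  - by have [_ _ _ /subsetP] := fanX i; apply; rewrite !inE eqxx orbT.
  - by case: (eF i) => _ [].
apply: has_minor_del_apexes fanX => // [i|i j x xi xj].
  by have [[sX _] _ _] := lineX i.
exact: (lines_disjoint tangleTg h3M YTg connY sXY trkX cardX xi xj).
Qed.
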